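(* Assume Hypotheses 1 and 2 (see context). For any $x_1=(a_1,z_1),x_2=(a_2,z_2)\in U$ and $t_0>0$, if $x_2\in\mathcal{C}(x_1)$, $\Phi([0,t_0],x_1)\subset U$ and $\Phi([0,t_0],x_2)\subset U$, then, writing $\Phi(t,x_i)=(\tilde a_i(t),\tilde z_i(t))$, we have $\|\tilde a_2(t)-\tilde a_1(t)\|\ge\|a_2-a_1\|e^{c_1t}$ for all $t\in[0,t_0]$.
   Context: System $\dot a=f(a,z)$, $\dot z=g(a,z)$, $(a,z)\in\mathbb{R}^n\times\mathbb{R}^m$, $x=(a,z)$, $X=\mathbb{R}^n\times\mathbb{R}^m$, with flow $\Phi(t,x)$; Euclidean inner product, norm, operator norm. $\mathcal{L}(x_1,x_2)=\|a_2-a_1\|^2-\|z_2-z_1\|^2$; $\mathcal{C}(x)=\{x'\in X:\mathcal{L}(x',x)\ge0\}$; $\mathbb{B}_d(x)=\{(a',z'):\|a'-a\|\le d,\|z'-z\|\le d\}$. Hypothesis 1: $U$ is open and convex, and there is $d>0$ with $\mathcal{C}(x)\cap U\subset\mathbb{B}_d(x)$ for all $x\in U$. Hypothesis 2: $f,g$ are $C^1$ on $U$; there exist a continuous positive $\alpha:U\to\mathbb{R}$, a continuous nonnegative $\ell:U\to\mathbb{R}$ and $c_1>0$ with, for all $x\in U$: $\langle a',D_af(x)a'\rangle\ge\alpha(x)\|a'\|^2$ for all $a'$; $\langle z',D_zg(x)z'\rangle\le\ell(x)\|z'\|^2$ for all $z'$; $\alpha(x)\ge\ell(x)+\|D_zf(x)\|+\|D_ag(x)\|+c_1$.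 *)

From mathcomp Require Import ssreflect ssrfun ssrbool eqtype ssrnat seq fintype bigop.
From Stdlib Require Import Reals ClassicalEpsilon.
Open Scope R_scope.

Definition vec (n : nat) := 'I_n -> R.

Definition vzero (n : nat) : vec n := fun _ => 0.
Definition vadd {n} (u v : vec n) : vec n := fun i => u i + v i.
Definition vsub {n} (u v : vec n) : vec n := fun i => u i - v i.
Definition vscale {n} (c : R) (v : vec n) : vec n := fun i => c * v i.

Definition dot {n} (u v : vec n) : R := \big[Rplus/0]_(i < n) (u i * v i).
Definition vnorm {n} (v : vec n) : R := sqrt (dot v v).

Definition pnorm {n m} (a : vec n) (z : vec m) : R :=
  sqrt (dot a a + dot z z).

(* Operator norm of L : R^p -> R^q: sup { ||L v|| : ||v|| <= 1 }
   (set to 0 if the set is unbounded, which never happens for linear L) *)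
Definition opnorm_set {p q} (L : vec p -> vec q) (r : R) : Prop :=
  exists v : vec p, vnorm v <= 1 /\ r = vnorm (L v).

Lemma opnorm_set_inhabited {p q} (L : vec p -> vec q) :
  exists r, opnorm_set L r.
Proof.
  exists (vnorm (L (vzero p))). exists (vzero p). split; last by [].
  rewrite /vnorm /dot /vzero.
  have -> : \big[Rplus/0]_(i < p) (0 * 0) = 0.
    apply: (big_ind (fun x => x = 0)) => //.
    - by move=> x y -> ->; rewrite Rplus_0_l.
    - by move=> i _; rewrite Rmult_0_l.
  rewrite sqrt_0; left; exact Rlt_0_1.
Qed.

Definition opnorm {p q} (L : vec p -> vec q) : R :=
  match excluded_middle_informative (bound (opnorm_set L)) with
  | left Hb => proj1_sig (completeness _ Hb (opnorm_set_inhabited L))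
  | right _ => 0
  end.

Definition linear2 {n m k} (L : vec n -> vec m -> vec k) : Prop :=
  (forall a1 z1 a2 z2, L (vadd a1 a2) (vadd z1 z2) = vadd (L a1 z1) (L a2 z2)) /\
  (forall c a z, L (vscale c a) (vscale c z) = vscale c (L a z)).

Definition frechet {n m k} (F : vec n -> vec m -> vec k) (a : vec n) (z : vec m)
  (L : vec n -> vec m -> vec k) : Prop :=
  linear2 L /\
  forall eps, 0 < eps -> exists delta, 0 < delta /\
    forall a' z', pnorm a' z' < delta ->
      vnorm (vsub (vsub (F (vadd a a') (vadd z z')) (F a z)) (L a' z'))
        <= eps * pnorm a' z'.

Definition C1_on {n m k} (U : vec n -> vec m -> Prop) (F : vec n -> vec m -> vec k)
  (DF : vec n -> vec m -> vec n -> vec m -> vec k) : Prop :=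
  (forall a z, U a z -> frechet F a z (DF a z)) /\
  (forall a z, U a z -> forall eps, 0 < eps -> exists delta, 0 < delta /\
     forall a2 z2, U a2 z2 -> pnorm (vsub a2 a) (vsub z2 z) < delta ->
       forall a' z', vnorm (vsub (DF a2 z2 a' z') (DF a z a' z')) <= eps * pnorm a' z').

Definition cont_on {n m} (U : vec n -> vec m -> Prop) (h : vec n -> vec m -> R) : Prop :=
  forall a z, U a z -> forall eps, 0 < eps -> exists delta, 0 < delta /\
    forall a2 z2, U a2 z2 -> pnorm (vsub a2 a) (vsub z2 z) < delta ->
      Rabs (h a2 z2 - h a z) < eps.

Definition open_set {n m} (U : vec n -> vec m -> Prop) : Prop :=
  forall a z, U a z -> exists r, 0 < r /\
    forall a2 z2, pnorm (vsub a2 a) (vsub z2 z) < r -> U a2 z2.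

Definition convex_set {n m} (U : vec n -> vec m -> Prop) : Prop :=
  forall a1 z1 a2 z2 lam, U a1 z1 -> U a2 z2 -> 0 <= lam <= 1 ->
    U (vadd (vscale lam a1) (vscale (1 - lam) a2))
      (vadd (vscale lam z1) (vscale (1 - lam) z2)).

Definition Lcal {n m} (a1 : vec n) (z1 : vec m) (a2 : vec n) (z2 : vec m) : R :=
  vnorm (vsub a2 a1) ^ 2 - vnorm (vsub z2 z1) ^ 2.

Definition in_cone {n m} (a : vec n) (z : vec m) (a' : vec n) (z' : vec m) : Prop :=
  Lcal a' z' a z >= 0.

Definition in_ball {n m} (d : R) (a : vec n) (z : vec m) (a' : vec n) (z' : vec m) : Prop :=
  vnorm (vsub a' a) <= d /\ vnorm (vsub z' z) <= d.

Definition Hyp1 {n m} (U : vec n -> vec m -> Prop) : Prop :=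
  open_set U /\ convex_set U /\
  exists d, 0 < d /\ forall a z, U a z ->
    forall a' z', in_cone a z a' z' -> U a' z' -> in_ball d a z a' z'.

(* Hypothesis 2 (partial derivatives D_a f(x) a' = Df(x)(a',0), etc.) *)
Definition Hyp2 {n m} (U : vec n -> vec m -> Prop)
  (f : vec n -> vec m -> vec n) (g : vec n -> vec m -> vec m)
  (Df : vec n -> vec m -> vec n -> vec m -> vec n)
  (Dg : vec n -> vec m -> vec n -> vec m -> vec m)
  (alpha ell : vec n -> vec m -> R) (c1 : R) : Prop :=
  C1_on U f Df /\ C1_on U g Dg /\
  cont_on U alpha /\ (forall a z, U a z -> 0 < alpha a z) /\
  cont_on U ell /\ (forall a z, U a z -> 0 <= ell a z) /\
  0 < c1 /\
  forall a z, U a z ->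
    (forall a' : vec n, dot a' (Df a z a' (vzero m)) >= alpha a z * vnorm a' ^ 2) /\
    (forall z' : vec m, dot z' (Dg a z (vzero n) z') <= ell a z * vnorm z' ^ 2) /\
    alpha a z >= ell a z + opnorm (fun z' => Df a z (vzero n) z')
                         + opnorm (fun a' => Dg a z a' (vzero m)) + c1.

Definition solves_on {n m} (f : vec n -> vec m -> vec n) (g : vec n -> vec m -> vec m)
  (A : R -> vec n) (Z : R -> vec m) (t0 : R) : Prop :=
  forall t, 0 <= t <= t0 ->
    (forall i, derivable_pt_lim (fun s => A s i) t (f (A t) (Z t) i)) /\
    (forall j, derivable_pt_lim (fun s => Z s j) t (g (A t) (Z t) j)).

(* Write Na = |a2 - a1|^2 and Nz = |z2 - z1|^2 along the two
   solutions.  Hypothesis 2, combined with the mean value theorem on the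
   segment joining the two points (which lies in the convex set U), shows
   that as long as Nz <= Na (the solutions are in each other's cone)
     Na' >= 2 c1 Na   and   (Na - Nz)' >= 2 c1 Na.
   The first inequality gives Na(s) >= Na(0) e^(2 c1 s) (a Gronwall-type
   argument), hence Na > 0, hence (Na - Nz)' > 0 wherever Na - Nz vanishes;
   a barrier argument then shows Na - Nz never becomes negative.  Taking
   square roots in the growth bound gives the theorem. *)
From HB Require Import structures.
From mathcomp Require Import ssreflect ssrfun ssrbool eqtype ssrnat seq fintype bigop.
From Stdlib Require Import Reals Lra Psatz FunctionalExtensionality ClassicalEpsilon Classical.
Open Scope R_scope.

(* Real addition as a commutative monoid law, so that the generic bigop
   lemmas apply to the sums [\big[Rplus/0]] used by [dot]. *)
HB.instance Definition _ :=
  Monoid.isComLaw.Build R 0 Rplus (fun x y z => esym (Rplus_assoc x y z)) Rplus_comm Rplus_0_l.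

Lemma sumR_scal {I} (r : seq I) (P : pred I) (c : R) (F : I -> R) :
  \big[Rplus/0]_(i <- r | P i) (c * F i) = c * \big[Rplus/0]_(i <- r | P i) F i.
Proof. by rewrite (big_morph (Rmult c) (id1 := 0) (op1 := Rplus)) //; [move=> x y; ring | ring]. Qed.

Lemma sumR_le {I} (r : seq I) (P : pred I) (F G : I -> R) :
  (forall i, P i -> F i <= G i) ->
  \big[Rplus/0]_(i <- r | P i) F i <= \big[Rplus/0]_(i <- r | P i) G i.
Proof. by move=> H; apply: (big_ind2 Rle) => //; [lra | move=> *; lra]. Qed.

Lemma sumR_ge0 {I} (r : seq I) (P : pred I) (F : I -> R) :
  (forall i, P i -> 0 <= F i) -> 0 <= \big[Rplus/0]_(i <- r | P i) F i.
Proof. by move=> H; apply: (big_ind (fun x => 0 <= x)) => //; [lra | move=> *; lra]. Qed.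

Lemma sumR_eq0 {I} (r : seq I) (P : pred I) (F : I -> R) :
  (forall i, P i -> F i = 0) -> \big[Rplus/0]_(i <- r | P i) F i = 0.
Proof. by move=> H; apply: (big_ind (fun x => x = 0)) => //; move=> x y -> ->; ring. Qed.

Section Euclid.
Context {k : nat}.
Implicit Types u v w : vec k.

Lemma dot_sym u v : dot u v = dot v u.
Proof. by apply: eq_bigr => i _; ring. Qed.

Lemma dot_add_r u v w : dot u (vadd v w) = dot u v + dot u w.
Proof. by rewrite /dot -big_split; apply: eq_bigr => i _ /=; rewrite /vadd; ring. Qed.

Lemma dot_scale_r u c v : dot u (vscale c v) = c * dot u v.
Proof. by rewrite /dot -sumR_scal; apply: eq_bigr => i _; rewrite /vscale; ring. Qed.

Lemma dot_scale_l u c v : dot (vscale c v) u = c * dot v u.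
Proof. by rewrite dot_sym dot_scale_r dot_sym. Qed.

Lemma dot_sub_r u v w : dot u (vsub v w) = dot u v - dot u w.
Proof.
have -> : vsub v w = vadd v (vscale (-1) w).
  by apply: functional_extensionality => i; rewrite /vsub /vadd /vscale; ring.
rewrite dot_add_r dot_scale_r; ring.
Qed.

Lemma dot_sub_l u v w : dot (vsub v w) u = dot v u - dot w u.
Proof. by rewrite dot_sym dot_sub_r !(dot_sym u). Qed.

Lemma dot_zero_l u : dot (vzero k) u = 0.
Proof. by apply: sumR_eq0 => i _; rewrite /vzero; ring. Qed.

Lemma dot_ge0 u : 0 <= dot u u.
Proof. by apply: sumR_ge0 => i _; nra. Qed.

Lemma vnorm_ge0 u : 0 <= vnorm u.
Proof. exact: sqrt_pos. Qed.

Lemma vnorm_sq u : vnorm u * vnorm u = dot u u.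
Proof. exact/sqrt_sqrt/dot_ge0. Qed.

Lemma vnorm_zero : vnorm (vzero k) = 0.
Proof. by rewrite /vnorm dot_zero_l sqrt_0. Qed.

Lemma vnorm_vsub_sym u v : vnorm (vsub u v) = vnorm (vsub v u).
Proof. by rewrite /vnorm /dot; congr sqrt; apply: eq_bigr => i _; rewrite /vsub; ring. Qed.

Lemma coord_sq_le u i : u i * u i <= dot u u.
Proof.
rewrite /dot (bigD1 i) //=.
rewrite -{1}(Rplus_0_r (u i * u i)); apply: Rplus_le_compat_l.
by apply: sumR_ge0 => j _; nra.
Qed.

Lemma vnorm_eq0 u : vnorm u = 0 -> u = vzero k.
Proof.
move=> H0; apply: functional_extensionality => i; rewrite /vzero.
have := coord_sq_le u i; rewrite -vnorm_sq H0; nra.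
Qed.

Lemma vnorm_scale c u : vnorm (vscale c u) = Rabs c * vnorm u.
Proof.
rewrite /vnorm dot_scale_l dot_scale_r -Rmult_assoc sqrt_mult_alt; last by nra.
by rewrite -/(Rsqr c) sqrt_Rsqr_abs.
Qed.

(* Cauchy-Schwarz, from the nonnegativity of |a u -/+ b v|^2 with
   a = |v| and b = |u|. *)
Lemma cauchy_schwarz u v : Rabs (dot u v) <= vnorm u * vnorm v.
Proof.
case: (Req_dec (vnorm u) 0) => [/vnorm_eq0 -> | Hu0].
  by rewrite dot_zero_l vnorm_zero Rabs_R0; lra.
case: (Req_dec (vnorm v) 0) => [/vnorm_eq0 -> | Hv0].
  by rewrite dot_sym dot_zero_l vnorm_zero Rabs_R0; lra.
have Su := vnorm_sq u; have Sv := vnorm_sq v.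
set a := vnorm v in Sv Hv0 *; set b := vnorm u in Su Hu0 *.
have Ha : 0 < a by have := vnorm_ge0 v; rewrite -/a; lra.
have Hb : 0 < b by have := vnorm_ge0 u; rewrite -/b; lra.
have Q : forall s, 0 <= a * a * dot u u - 2 * s * a * b * dot u v + s * s * b * b * dot v v.
  move=> s; have := dot_ge0 (vsub (vscale a u) (vscale (s * b) v)).
  rewrite !dot_sub_l !dot_sub_r !dot_scale_l !dot_scale_r (dot_sym v u).
  by move=> ?; nra.
have Q1 := Q 1; have Q2 := Q (-1).
rewrite -Su -Sv in Q1 Q2.
have ab : 0 < b * a by nra.
apply: Rabs_le; split; apply: (Rmult_le_reg_r (b * a)) => //; nra.
Qed.

Lemma vnorm_triangle u v : vnorm (vadd u v) <= vnorm u + vnorm v.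
Proof.
have E : dot (vadd u v) (vadd u v) = dot u u + 2 * dot u v + dot v v.
  by rewrite dot_add_r !(dot_sym (vadd u v)) !dot_add_r (dot_sym v u); ring.
have C := cauchy_schwarz u v; have := Rle_abs (dot u v).
rewrite -!vnorm_sq in E.
have := vnorm_ge0 u; have := vnorm_ge0 v.
move=> *; apply: Rsqr_incr_0_var; rewrite /Rsqr; nra.
Qed.

End Euclid.

Lemma vadd_zero {p} : vadd (vzero p) (vzero p) = vzero p.
Proof. by apply: functional_extensionality => i; rewrite /vadd /vzero; ring. Qed.

Lemma vscale_zero {p} c : vscale c (vzero p) = vzero p.
Proof. by apply: functional_extensionality => i; rewrite /vscale /vzero; ring. Qed.

Definition ebasis {p} (i : 'I_p) : vec p := fun j => if i == j then 1 else 0.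

Lemma vec_decomp {p} (v : vec p) :
  v = \big[vadd/vzero p]_(i < p) vscale (v i) (ebasis i).
Proof.
apply: functional_extensionality => j.
rewrite (big_morph (fun w : vec p => w j) (id1 := 0) (op1 := Rplus)) //.
rewrite (bigD1 j) //= /vscale /ebasis eqxx big1; first ring.
by move=> i /negbTE ->; ring.
Qed.

Section OperatorNorm.
Context {p q : nat} (L : vec p -> vec q).
Hypothesis Hadd : forall x y, L (vadd x y) = vadd (L x) (L y).
Hypothesis Hsc : forall c x, L (vscale c x) = vscale c (L x).

Lemma linear_zero : L (vzero p) = vzero q.
Proof.
rewrite -(vscale_zero (p := p) 0) Hsc.
by apply: functional_extensionality => i; rewrite /vscale /vzero; ring.
Qed.

(* The image of the unit ball is bounded by the sum of the norms of the
   images of the standard basis vectors. *)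
Lemma opnorm_set_bounded : bound (opnorm_set L).
Proof.
exists (\big[Rplus/0]_(i < p) vnorm (L (ebasis i))) => r [v [Hv ->]].
rewrite (vec_decomp v) (big_morph L (id1 := vzero q) (op1 := vadd)) ?linear_zero //.
apply: Rle_trans (_ : _ <= \big[Rplus/0]_(i < p) vnorm (L (vscale (v i) (ebasis i)))) _.
  apply: (big_ind2 (fun (x : vec q) (y : R) => vnorm x <= y)).
  - by rewrite vnorm_zero; lra.
  - by move=> x1 x2 y1 y2 H1 H2; have := vnorm_triangle x1 y1; lra.
  - by move=> i _; lra.
apply: sumR_le => i _; rewrite Hsc vnorm_scale.
have Hvi : Rabs (v i) <= 1.
  have := coord_sq_le v i; rewrite -vnorm_sq => C.
  have Hv0 := vnorm_ge0 v; apply: Rabs_le; split; nra.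
by have := vnorm_ge0 (L (ebasis i)); nra.
Qed.

Lemma opnorm_bound : 0 <= opnorm L /\ forall v, vnorm (L v) <= opnorm L * vnorm v.
Proof.
have [Hup _] : is_lub (opnorm_set L) (opnorm L).
  rewrite /opnorm; case: excluded_middle_informative => [H | ]; last by have := opnorm_set_bounded.
  by case: (completeness _ H (opnorm_set_inhabited L)).
have G0 : 0 <= opnorm L.
  by apply: Hup; exists (vzero p); rewrite linear_zero !vnorm_zero; split; lra.
split => // v.
case: (Req_dec (vnorm v) 0) => [/vnorm_eq0 -> | H0].
  by rewrite linear_zero !vnorm_zero; lra.
have Hpos : 0 < vnorm v by have := vnorm_ge0 v; lra.
have Hinv : 0 < / vnorm v by apply: Rinv_0_lt_compat.
have Hw : vnorm (L (vscale (/ vnorm v) v)) <= opnorm L.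
  apply: Hup; exists (vscale (/ vnorm v) v); split => //.
  by rewrite vnorm_scale Rabs_right ?Rinv_l; lra.
rewrite Hsc vnorm_scale Rabs_right in Hw; last lra.
apply: (Rmult_le_reg_l (/ vnorm v)) => //.
by rewrite (Rmult_comm (opnorm L)) -Rmult_assoc Rinv_l; lra.
Qed.

End OperatorNorm.

Section Linear2.
Context {n m k : nat} (L : vec n -> vec m -> vec k).
Hypothesis HL : linear2 L.

Lemma linear2_split a z : L a z = vadd (L a (vzero m)) (L (vzero n) z).
Proof.
case: HL => Hadd _; rewrite -Hadd; congr L.
- by apply: functional_extensionality => i; rewrite /vadd /vzero; ring.
- by apply: functional_extensionality => i; rewrite /vadd /vzero; ring.
Qed.

Lemma linear2_opnorm_a :
  0 <= opnorm (fun a => L a (vzero m)) /\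
  forall a, vnorm (L a (vzero m)) <= opnorm (fun a => L a (vzero m)) * vnorm a.
Proof.
case: HL => Hadd Hsc; apply: opnorm_bound => [x y | c x].
- by rewrite -Hadd vadd_zero.
- by rewrite -Hsc vscale_zero.
Qed.

Lemma linear2_opnorm_z :
  0 <= opnorm (fun z => L (vzero n) z) /\
  forall z, vnorm (L (vzero n) z) <= opnorm (fun z => L (vzero n) z) * vnorm z.
Proof.
case: HL => Hadd Hsc; apply: opnorm_bound => [x y | c x].
- by rewrite -Hadd vadd_zero.
- by rewrite -Hsc vscale_zero.
Qed.

End Linear2.

Lemma derivable_of_remainder (F : R -> R) x l :
  (forall e, 0 < e -> exists d, 0 < d /\
     forall h, Rabs h < d -> Rabs (F (x + h) - F x - l * h) <= e * Rabs h) ->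
  derivable_pt_lim F x l.
Proof.
move=> H eps Heps; have [d [Hd Hrem]] := H (eps / 2) ltac:(lra).
exists (mkposreal d Hd) => h h0 /= hd.
have Hh : 0 < Rabs h by apply: Rabs_pos_lt.
have -> : (F (x + h) - F x) / h - l = (F (x + h) - F x - l * h) / h by field.
rewrite /Rdiv Rabs_mult Rabs_inv; apply: (Rmult_lt_reg_r (Rabs h)) => //.
rewrite Rmult_assoc Rinv_l; last lra.
by have := Hrem h hd; nra.
Qed.

Lemma derivable_continuous (F : R -> R) x l :
  derivable_pt_lim F x l -> forall e, 0 < e ->
  exists d, 0 < d /\ forall y, Rabs (y - x) < d -> Rabs (F y - F x) < e.
Proof.
move=> H e He.
have [d [Hd Hy]] := derivable_continuous_pt F x (exist _ l H) e He.
exists d; split => // y Hyx.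
case: (Req_dec x y) => [<- | Hne]; first by rewrite Rminus_diag_eq // Rabs_R0.
exact: (Hy y (conj (conj I Hne) Hyx)).
Qed.

Lemma derivable_pos_increase (F : R -> R) x l :
  derivable_pt_lim F x l -> 0 < l ->
  exists d, 0 < d /\ forall h, 0 < h < d -> F x < F (x + h).
Proof.
move=> H Hl; have [d Hd] := H l Hl.
exists d; split => [|h Hh]; first exact: cond_pos.
have /Rabs_def2 [_ Hq] : Rabs ((F (x + h) - F x) / h - l) < l.
  by apply: Hd; [lra | rewrite Rabs_right; lra].
have Hq' : 0 < (F (x + h) - F x) / h by lra.
have : 0 < (F (x + h) - F x) / h * h by apply: Rmult_lt_0_compat; lra.
by rewrite /Rdiv Rmult_assoc Rinv_l; lra.
Qed.

Lemma mvt_lower_bound (F F' : R -> R) a b k :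
  a <= b ->
  (forall s, a <= s <= b -> derivable_pt_lim F s (F' s)) ->
  (forall s, a <= s <= b -> k <= F' s) ->
  k * (b - a) <= F b - F a.
Proof.
move=> Hab HD Hk; case: (Req_dec a b) => [-> | Hne]; first lra.
have [c [-> Hc]] := MVT_cor2 F F' a b ltac:(lra) HD.
apply: Rmult_le_compat_r; [lra | apply: Hk; lra].
Qed.

Lemma derivable_exp_lin k x :
  derivable_pt_lim (fun s => exp (k * s)) x (k * exp (k * x)).
Proof.
rewrite Rmult_comm; apply: (derivable_pt_lim_comp (fun s => k * s) exp).
- have := derivable_pt_lim_scal id k x 1 (derivable_pt_lim_id x).
  by rewrite Rmult_1_r.
- exact: derivable_pt_lim_exp.
Qed.

(* Gronwall-type growth: N' >= k N on [0,T] implies N T >= N 0 e^(kT),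
   since N(s) e^(-ks) is nondecreasing. *)
Lemma exp_growth (N N' : R -> R) k T :
  0 <= T ->
  (forall s, 0 <= s <= T -> derivable_pt_lim N s (N' s)) ->
  (forall s, 0 <= s <= T -> k * N s <= N' s) ->
  N 0 * exp (k * T) <= N T.
Proof.
move=> HT HD Hk.
pose h s := N s * exp (- k * s).
have Dh : forall s, 0 <= s <= T ->
    derivable_pt_lim h s ((N' s - k * N s) * exp (- k * s)).
  move=> s Hs; have -> : (N' s - k * N s) * exp (- k * s)
      = N' s * exp (- k * s) + N s * (- k * exp (- k * s)) by ring.
  exact: derivable_pt_lim_mult (HD s Hs) (derivable_exp_lin (- k) s).
have Hinc : 0 * (T - 0) <= h T - h 0.
  apply: (mvt_lower_bound h _ 0 T 0 HT Dh) => s Hs.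
  by have := Hk s Hs; have := exp_pos (- k * s); nra.
rewrite /h Rmult_0_r exp_0 Rmult_1_r in Hinc.
have -> : N T = N T * exp (- k * T) * exp (k * T).
  by rewrite Rmult_assoc -exp_plus (_ : - k * T + k * T = 0) ?exp_0; ring.
by have := exp_pos (k * T); nra.
Qed.

Lemma nonneg_at_sup (F : R -> R) T l :
  0 < T -> derivable_pt_lim F T l ->
  (forall r, 0 <= r < T -> 0 <= F r) -> 0 <= F T.
Proof.
move=> HT HD Hbelow; apply: Rnot_lt_le => Hneg.
have [d [Hd Hc]] := derivable_continuous F T l HD (- F T) ltac:(lra).
pose r := T - Rmin (d / 2) (T / 2).
have Hm1 := Rmin_l (d / 2) (T / 2); have Hm2 := Rmin_r (d / 2) (T / 2).
have Hm3 : 0 < Rmin (d / 2) (T / 2) by apply: Rmin_glb_lt; lra.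
have := Hc r ltac:(rewrite /r Rabs_left; lra).
have := Hbelow r ltac:(rewrite /r; lra).
by move=> H1 /Rabs_def2 [H2 _]; lra.
Qed.

Lemma nonneg_persists (F : R -> R) T l :
  derivable_pt_lim F T l -> 0 <= F T -> (F T = 0 -> 0 < l) ->
  exists d, 0 < d /\ forall h, 0 < h < d -> 0 <= F (T + h).
Proof.
move=> HD HT Hzero; case: (Rle_lt_or_eq_dec _ _ HT) => [Hpos | /esym H0].
- have [d [Hd Hc]] := derivable_continuous F T l HD (F T) Hpos.
  exists d; split => // h Hh.
  have /Rabs_def2 [_ H] := Hc (T + h) ltac:(rewrite (_ : T + h - T = h); [rewrite Rabs_right; lra | ring]).
  lra.
- have [d [Hd Hinc]] := derivable_pos_increase F T l HD (Hzero H0).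
  by exists d; split => // h Hh; have := Hinc h Hh; lra.
Qed.

(* The proof takes the supremum T of the times up to which F >= 0. *)
Lemma barrier_invariance (F F' : R -> R) t0 :
  0 <= t0 ->
  (forall s, 0 <= s <= t0 -> derivable_pt_lim F s (F' s)) ->
  0 <= F 0 ->
  (forall s, 0 <= s < t0 -> (forall r, 0 <= r <= s -> 0 <= F r) ->
     F s = 0 -> 0 < F' s) ->
  forall s, 0 <= s <= t0 -> 0 <= F s.
Proof.
move=> Ht0 HD H0 Hbar.
pose E s := 0 <= s <= t0 /\ forall r, 0 <= r <= s -> 0 <= F r.
have E0 : E 0.
  by split => [|r Hr]; [lra | rewrite (_ : r = 0); [exact: H0 | lra]].
have [T [HTub HTleast]] := completeness E (ex_intro _ t0 (fun s Es => proj2 (proj1 Es))) (ex_intro _ 0 E0).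
have T0 : 0 <= T by apply: HTub.
have Tt0 : T <= t0 by apply: HTleast => s [Hs _]; lra.
have Below : forall r, 0 <= r < T -> 0 <= F r.
  move=> r Hr; apply: NNPP => Hneg.
  suff : T <= r by lra.
  apply: HTleast => s [Hs Hsr]; apply: Rnot_lt_le => Hrs.
  by apply: Hneg; apply: Hsr; lra.
have UpToT : forall r, 0 <= r <= T -> 0 <= F r.
  move=> r Hr; case: (Req_dec r T) => [-> | Hne]; last by apply: Below; lra.
  case: (Req_dec T 0) => [-> // | HT0].
  by apply: (nonneg_at_sup F T (F' T)) => //; [lra | apply: HD; lra].
move=> s Hs; case: (Req_dec T t0) => [HT | HT]; first by apply: UpToT; lra.
have [d [Hd Hright]] : exists d, 0 < d /\ forall h, 0 < h < d -> 0 <= F (T + h).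
  apply: (nonneg_persists F T (F' T)); [apply: HD; lra | apply: UpToT; lra |].
  by apply: Hbar => //; lra.
(* F stays nonnegative slightly beyond T, contradicting maximality. *)
pose T' := T + Rmin d (t0 - T) / 2.
have Hm1 := Rmin_l d (t0 - T); have Hm2 := Rmin_r d (t0 - T).
have Hm3 : 0 < Rmin d (t0 - T) by apply: Rmin_glb_lt; lra.
have : E T'.
  split => [|r Hr]; first by rewrite /T'; lra.
  case: (Rle_lt_dec r T) => HrT; first by apply: UpToT; lra.
  by rewrite (_ : r = T + (r - T)); [apply: Hright; rewrite /T' in Hr; lra | ring].
by move/HTub; rewrite /T'; lra.
Qed.

(* Growth makes
   Na > 0, so (Na - Nz)' > 0 at every zero of Na - Nz, and the barrier
   principle applies. *)
Lemma cone_growth (Na Nz la lz : R -> R) c t0 :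
  0 < c -> 0 <= t0 ->
  (forall s, 0 <= s <= t0 -> derivable_pt_lim Na s (la s)) ->
  (forall s, 0 <= s <= t0 -> derivable_pt_lim Nz s (lz s)) ->
  (forall s, 0 <= s <= t0 -> Nz s <= Na s -> c * Na s <= la s /\ c * Na s <= la s - lz s) ->
  0 < Na 0 -> Nz 0 <= Na 0 ->
  forall t, 0 <= t <= t0 -> Na 0 * exp (c * t) <= Na t.
Proof.
move=> Hc Ht0 DNa DNz Rate Na0 Init.
have Growth : forall s, 0 <= s <= t0 -> (forall r, 0 <= r <= s -> Nz r <= Na r) ->
    Na 0 * exp (c * s) <= Na s.
  move=> s Hs Hin; apply: (exp_growth Na la) => [| r Hr | r Hr]; first lra.
  - by apply: DNa; lra.
  - by apply: (proj1 (Rate r _ _)); [lra | apply: Hin].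
have Inv : forall s, 0 <= s <= t0 -> 0 <= Na s - Nz s.
  apply: (barrier_invariance _ (fun s => la s - lz s) t0 Ht0) => [s Hs | | s Hs Hin Hzero].
  - by apply: derivable_pt_lim_minus; [apply: DNa | apply: DNz].
  - lra.
  - have Hle : Nz s <= Na s by lra.
    have := Growth s ltac:(lra) (fun r Hr => ltac:(have := Hin r Hr; lra)).
    have := proj2 (Rate s ltac:(lra) Hle).
    have := Rmult_lt_0_compat _ _ Na0 (exp_pos (c * s)); nra.
move=> t Ht; apply: Growth => // r Hr.
by have := Inv r ltac:(lra); lra.
Qed.

Lemma derivable_big_sum {I} (r : seq I) (F : I -> R -> R) (F' : I -> R) x :
  (forall i, derivable_pt_lim (F i) x (F' i)) ->
  derivable_pt_lim (fun s => \big[Rplus/0]_(i <- r) F i s) x (\big[Rplus/0]_(i <- r) F' i).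
Proof.
move=> H; elim: r => [|i r IH].
  rewrite big_nil; apply: derivable_pt_lim_ext (derivable_pt_lim_const 0 x).
  by move=> s; rewrite big_nil.
rewrite big_cons; apply: derivable_pt_lim_ext (derivable_pt_lim_plus _ _ x _ _ (H i) IH).
by move=> s; rewrite big_cons.
Qed.

Lemma derivable_normsq {k} (X : R -> vec k) (X' : vec k) t :
  (forall i, derivable_pt_lim (fun s => X s i) t (X' i)) ->
  derivable_pt_lim (fun s => dot (X s) (X s)) t (2 * dot (X t) X').
Proof.
move=> H; rewrite /dot -sumR_scal.
have -> : \big[Rplus/0]_(i < k) (2 * (X t i * X' i)) =
          \big[Rplus/0]_(i < k) (X' i * X t i + X t i * X' i).
  by apply: eq_bigr => i _; ring.
apply: (derivable_big_sum _ (fun i s => X s i * X s i)) => i.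
exact: derivable_pt_lim_mult.
Qed.

Lemma derivable_dist_sq {k} (X Y : R -> vec k) (X' Y' : vec k) t :
  (forall i, derivable_pt_lim (fun s => X s i) t (X' i)) ->
  (forall i, derivable_pt_lim (fun s => Y s i) t (Y' i)) ->
  derivable_pt_lim (fun s => dot (vsub (X s) (Y s)) (vsub (X s) (Y s))) t
    (2 * dot (vsub (X t) (Y t)) (vsub X' Y')).
Proof.
move=> HX HY; apply: (derivable_normsq (fun s => vsub (X s) (Y s))) => i.
exact: derivable_pt_lim_minus.
Qed.

Lemma pnorm_ge0 {n m} (a : vec n) (z : vec m) : 0 <= pnorm a z.
Proof. exact: sqrt_pos. Qed.

Lemma pnorm_scale {n m} h (u : vec n) (w : vec m) :
  pnorm (vscale h u) (vscale h w) = Rabs h * pnorm u w.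
Proof.
rewrite /pnorm !dot_scale_l !dot_scale_r.
rewrite (_ : h * (h * dot u u) + h * (h * dot w w) = Rsqr h * (dot u u + dot w w));
  last by rewrite /Rsqr; ring.
by rewrite sqrt_mult_alt ?sqrt_Rsqr_abs //; apply: Rle_0_sqr.
Qed.

Lemma frechet_ray_remainder {n m k} (F : vec n -> vec m -> vec k) a z L u w :
  frechet F a z L -> forall e, 0 < e -> exists d, 0 < d /\
  forall h, Rabs h < d ->
    vnorm (vsub (vsub (F (vadd a (vscale h u)) (vadd z (vscale h w))) (F a z))
                (vscale h (L u w))) <= e * Rabs h.
Proof.
move=> [[_ Lsc] HF] e He.
have Hp := pnorm_ge0 u w.
have [d [Hd Hrem]] := HF (e / (pnorm u w + 1)) ltac:(apply: Rdiv_lt_0_compat; lra).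
exists (d / (pnorm u w + 1)); split => [|h Hh]; first by apply: Rdiv_lt_0_compat; lra.
have Hh0 := Rabs_pos h.
have Hsmall : pnorm (vscale h u) (vscale h w) < d.
  rewrite pnorm_scale.
  have : Rabs h * (pnorm u w + 1) < d.
    by rewrite (_ : d = d / (pnorm u w + 1) * (pnorm u w + 1)); [nra | field; lra].
  nra.
have := Hrem _ _ Hsmall; rewrite pnorm_scale Lsc => HR.
apply: Rle_trans HR _.
rewrite (_ : e / (pnorm u w + 1) * (Rabs h * pnorm u w)
           = e * Rabs h * (pnorm u w / (pnorm u w + 1))); last by field; lra.
have : pnorm u w / (pnorm u w + 1) <= 1.
  by apply: (Rmult_le_reg_r (pnorm u w + 1)); [lra | field_simplify; lra].
by have := Rmult_le_pos _ _ (Rlt_le _ _ He) Hh0; nra.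
Qed.

Definition seg {p} (r : R) (P Q : vec p) : vec p := vadd (vscale r P) (vscale (1 - r) Q).

Lemma seg_shift {p} r h (P Q : vec p) :
  seg (r + h) P Q = vadd (seg r P Q) (vscale h (vsub P Q)).
Proof. by apply: functional_extensionality => i; rewrite /seg /vadd /vscale /vsub; ring. Qed.

Lemma seg1 {p} (P Q : vec p) : seg 1 P Q = P.
Proof. by apply: functional_extensionality => i; rewrite /seg /vadd /vscale; ring. Qed.

Lemma seg0 {p} (P Q : vec p) : seg 0 P Q = Q.
Proof. by apply: functional_extensionality => i; rewrite /seg /vadd /vscale; ring. Qed.

Lemma segment_derivative {n m k} (F : vec n -> vec m -> vec k) L (c : vec k)
    Pa Qa Pz Qz r :
  frechet F (seg r Pa Qa) (seg r Pz Qz) L ->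
  derivable_pt_lim (fun s => dot c (F (seg s Pa Qa) (seg s Pz Qz))) r
    (dot c (L (vsub Pa Qa) (vsub Pz Qz))).
Proof.
move=> HF; apply: derivable_of_remainder => e He.
have Hc := vnorm_ge0 c.
have [d [Hd Hrem]] := frechet_ray_remainder F _ _ L (vsub Pa Qa) (vsub Pz Qz) HF
  (e / (vnorm c + 1)) ltac:(apply: Rdiv_lt_0_compat; lra).
have Edot : forall (X Y Z : vec k) h,
    dot c X - dot c Y - dot c Z * h = dot c (vsub (vsub X Y) (vscale h Z)).
  by move=> X Y Z h; rewrite !dot_sub_r dot_scale_r; ring.
exists d; split => // h Hh; rewrite !seg_shift Edot.
apply: Rle_trans (cauchy_schwarz _ _) _.
have Hb := Hrem h Hh; have Hh0 := Rabs_pos h.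
apply: Rle_trans (_ : _ <= vnorm c * (e / (vnorm c + 1) * Rabs h)) _.
  exact: Rmult_le_compat_l.
rewrite (_ : vnorm c * (e / (vnorm c + 1) * Rabs h)
           = e * Rabs h * (vnorm c / (vnorm c + 1))); last by field; lra.
have : vnorm c / (vnorm c + 1) <= 1.
  by apply: (Rmult_le_reg_r (vnorm c + 1)); [lra | field_simplify; lra].
by have := Rmult_le_pos _ _ (Rlt_le _ _ He) Hh0; nra.
Qed.

(* The scalar core of Hypothesis 2: with y <= x, the terms
   P >= al x^2, |Q| <= oz x y, S <= el y^2, |T| <= oa x y and
   al >= el + oz + oa + c leave at least c x^2. *)
Lemma cone_quadratic_bound (x y P Q S T al el oz oa c : R) :
  0 <= y <= x -> 0 <= el -> 0 <= oz -> 0 <= oa ->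
  al * x ^ 2 <= P -> Rabs Q <= x * (oz * y) ->
  S <= el * y ^ 2 -> Rabs T <= y * (oa * x) ->
  el + oz + oa + c <= al ->
  c * x ^ 2 <= P + Q /\ c * x ^ 2 <= P + Q - (T + S).
Proof.
move=> Hyx Hel Hoz Hoa HP HQ HS HT Hal.
have Q' := Rle_abs (- Q); rewrite Rabs_Ropp in Q'.
have T' := Rle_abs T.
have B1 : oz * x * y <= oz * x * x by apply: Rmult_le_compat_l; nra.
have B2 : oa * x * y <= oa * x * x by apply: Rmult_le_compat_l; nra.
have B3 : el * y ^ 2 <= el * x ^ 2 by apply: Rmult_le_compat_l => //; nra.
split; nra.
Qed.

Section ConeEstimates.
Context {n m : nat} (U : vec n -> vec m -> Prop)
  (f : vec n -> vec m -> vec n) (g : vec n -> vec m -> vec m)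
  (Df : vec n -> vec m -> vec n -> vec m -> vec n)
  (Dg : vec n -> vec m -> vec n -> vec m -> vec m)
  (alpha ell : vec n -> vec m -> R) (c1 : R).
Hypothesis H2 : Hyp2 U f g Df Dg alpha ell c1.

Lemma pointwise_cone_estimate Xa Xz (da : vec n) (dz : vec m) :
  U Xa Xz -> dot dz dz <= dot da da ->
  c1 * dot da da <= dot da (Df Xa Xz da dz) /\
  c1 * dot da da <= dot da (Df Xa Xz da dz) - dot dz (Dg Xa Xz da dz).
Proof.
case: H2 => [[Hf _] [[Hg _] [_ [_ [_ [Hell [_ Hh]]]]]]] HX Hcone.
have [Hexp [Hdiss Halpha]] := Hh _ _ HX.
have [OZ0 OZ] := linear2_opnorm_z _ (proj1 (Hf _ _ HX)).
have [OA0 OA] := linear2_opnorm_a _ (proj1 (Hg _ _ HX)).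
have Hx := vnorm_ge0 da; have Hy := vnorm_ge0 dz.
rewrite -!vnorm_sq in Hcone *.
rewrite (linear2_split _ (proj1 (Hf _ _ HX))) (linear2_split _ (proj1 (Hg _ _ HX))) !dot_add_r.
rewrite (_ : vnorm da * vnorm da = vnorm da ^ 2); last by ring.
apply: (cone_quadratic_bound _ (vnorm dz) _ _ _ _ (alpha Xa Xz) (ell Xa Xz)
  (opnorm (fun z => Df Xa Xz (vzero n) z)) (opnorm (fun a => Dg Xa Xz a (vzero m)))).
- by split => //; nra.
- exact: Hell.
- exact: OZ0.
- exact: OA0.
- by apply: Rge_le; apply: Hexp.
- by apply: Rle_trans (cauchy_schwarz _ _) _; apply: Rmult_le_compat_l => //; apply: OZ.
- exact: Hdiss.
- by apply: Rle_trans (cauchy_schwarz _ _) _; apply: Rmult_le_compat_l => //; apply: OA.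
- exact: Rge_le.
Qed.

(* The mean value theorem along the segment [Q,P] reduces it to the
   pointwise estimate. *)
Lemma two_point_cone_estimate Pa Pz Qa Qz :
  convex_set U -> U Pa Pz -> U Qa Qz ->
  dot (vsub Pz Qz) (vsub Pz Qz) <= dot (vsub Pa Qa) (vsub Pa Qa) ->
  let da := vsub Pa Qa in let dz := vsub Pz Qz in
  c1 * dot da da <= dot da (vsub (f Pa Pz) (f Qa Qz)) /\
  c1 * dot da da <= dot da (vsub (f Pa Pz) (f Qa Qz)) - dot dz (vsub (g Pa Pz) (g Qa Qz)).
Proof.
move=> Hconv HP HQ Hcone da dz.
have HU : forall r, 0 <= r <= 1 -> U (seg r Pa Qa) (seg r Pz Qz).
  by move=> r Hr; apply: Hconv.
have [[Hf _] [[Hg _] _]] := H2.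
pose chi1 r := dot da (f (seg r Pa Qa) (seg r Pz Qz)).
pose chi2 r := dot dz (g (seg r Pa Qa) (seg r Pz Qz)).
pose Df_seg r := dot da (Df (seg r Pa Qa) (seg r Pz Qz) da dz).
pose Dg_seg r := dot dz (Dg (seg r Pa Qa) (seg r Pz Qz) da dz).
have D1 : forall r, 0 <= r <= 1 -> derivable_pt_lim chi1 r (Df_seg r).
  by move=> r Hr; apply: segment_derivative; apply: Hf; apply: HU.
have D12 : forall r, 0 <= r <= 1 -> derivable_pt_lim (fun s => chi1 s - chi2 s) r (Df_seg r - Dg_seg r).
  move=> r Hr; apply: derivable_pt_lim_minus; first exact: D1.
  by apply: segment_derivative; apply: Hg; apply: HU.
have Est := fun r Hr => pointwise_cone_estimate _ _ da dz (HU r Hr) Hcone.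
have := mvt_lower_bound chi1 Df_seg 0 1 (c1 * dot da da) ltac:(lra) D1
  (fun r Hr => proj1 (Est r Hr)).
have := mvt_lower_bound _ _ 0 1 (c1 * dot da da) ltac:(lra) D12
  (fun r Hr => proj2 (Est r Hr)).
rewrite /chi1 /chi2 !seg1 !seg0 !dot_sub_r; lra.
Qed.

End ConeEstimates.

Lemma in_cone_sep_sq {n m} (a1 a2 : vec n) (z1 z2 : vec m) :
  in_cone a1 z1 a2 z2 ->
  dot (vsub z2 z1) (vsub z2 z1) <= dot (vsub a2 a1) (vsub a2 a1).
Proof.
rewrite /in_cone /Lcal (vnorm_vsub_sym a1) (vnorm_vsub_sym z1).
by rewrite -!Rsqr_pow2 /Rsqr !vnorm_sq; lra.
Qed.

Theorem lemma2p2 (n m : nat)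
  (f : vec n -> vec m -> vec n) (g : vec n -> vec m -> vec m)
  (U : vec n -> vec m -> Prop)
  (Df : vec n -> vec m -> vec n -> vec m -> vec n)
  (Dg : vec n -> vec m -> vec n -> vec m -> vec m)
  (alpha ell : vec n -> vec m -> R) (c1 : R)
  (H1 : Hyp1 U) (H2 : Hyp2 U f g Df Dg alpha ell c1)
  (a1 : vec n) (z1 : vec m) (a2 : vec n) (z2 : vec m) (t0 : R)
  (A1 A2 : R -> vec n) (Z1 Z2 : R -> vec m) :
  U a1 z1 -> U a2 z2 -> 0 < t0 ->
  in_cone a1 z1 a2 z2 ->
  A1 0 = a1 -> Z1 0 = z1 -> solves_on f g A1 Z1 t0 ->
  (forall t, 0 <= t <= t0 -> U (A1 t) (Z1 t)) ->
  A2 0 = a2 -> Z2 0 = z2 -> solves_on f g A2 Z2 t0 ->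
  (forall t, 0 <= t <= t0 -> U (A2 t) (Z2 t)) ->
  forall t, 0 <= t <= t0 ->
    vnorm (vsub (A2 t) (A1 t)) >= vnorm (vsub a2 a1) * exp (c1 * t).
Proof.
move=> _ _ Ht0 Hcone E1a E1z S1 U1 E2a E2z S2 U2 t Ht; subst a1 z1 a2 z2.
have Hconv : convex_set U by case: H1 => _ [].
have Hc1 : 0 < c1 by case: H2 => _ [_ [_ [_ [_ [_ []]]]]].
case: (Req_dec (vnorm (vsub (A2 0) (A1 0))) 0) => [-> | Hnz].
  by rewrite Rmult_0_l; apply/Rle_ge/vnorm_ge0.
pose Na s := dot (vsub (A2 s) (A1 s)) (vsub (A2 s) (A1 s)).
pose Nz s := dot (vsub (Z2 s) (Z1 s)) (vsub (Z2 s) (Z1 s)).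
have Gt : Na 0 * exp (2 * c1 * t) <= Na t.
  apply: (cone_growth Na Nz _ _ (2 * c1) t0).
  - lra.
  - lra.
  - by move=> s Hs; apply: derivable_dist_sq => i; [exact: (proj1 (S2 s Hs)) | exact: (proj1 (S1 s Hs))].
  - by move=> s Hs; apply: derivable_dist_sq => j; [exact: (proj2 (S2 s Hs)) | exact: (proj2 (S1 s Hs))].
  - move=> s Hs Hle.
    have [] := two_point_cone_estimate _ _ _ _ _ _ _ _ H2 _ _ _ _ Hconv (U2 s Hs) (U1 s Hs) Hle.
    by rewrite /Na; lra.
  - by rewrite /Na -vnorm_sq; have := vnorm_ge0 (vsub (A2 0) (A1 0)); nra.
  - exact: in_cone_sep_sq.
  - lra.
apply/Rle_ge/Rsqr_incr_0_var; last exact: vnorm_ge0.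
rewrite /Rsqr vnorm_sq -/(Na t); apply: Rle_trans Gt.
rewrite /Na -vnorm_sq (_ : 2 * c1 * t = c1 * t + c1 * t) ?exp_plus; [lra | ring].
Qed.
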